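(* (i) For every $n\ge0$ and $i\in\{0,1\}$, $\hat\epsilon_n(x,i)=v_n(x,i)-\hat v_n(x,i)$ is nondecreasing in $x$ (equivalently $\Delta_n(x,i)\le\hat\Delta_n(x,i)$ for all $x\ge0$). (ii) For every $n\ge 1$, $\hat B^d_n\le B^d_n$.
   Context: Parameters: $\lambda>0$, $0<\mu_l<\mu_h$, $\delta=\mu_h-\mu_l$, $R\ge 0$, $c>0$, and $h:\{0,1,2,\dots\}\to\mathbb{R}$ nondecreasing and convex with $h(0)=0$; the rates are normalized so that $\lambda+\mu_h+\beta=1$ for a discount rate $\beta>0$. Combined (admission + service-rate control) finite-horizon value functions on $S=\{0,1,2,\dots\}\times\{0,1\}$: $v_0\equiv 0$ and for $n\ge 0$: $v_{n+1}(0,0)=\lambda v_n(0,1)+\mu_h v_n(0,0)$; $v_{n+1}(x,0)=-h(x)+\lambda v_n(x,1)+\mu_l v_n(x-1,0)+\max\{\delta v_n(x,0),-c+\delta v_n(x-1,0)\}$ for $x\ge1$; $v_{n+1}(x,1)=\max\{R+v_{n+1}(x+1,0),v_{n+1}(x,0)\}$ for $x\ge 0$. Admission control subproblem (service rate always $\mu_l$): $\hat v_0\equiv0$ and for $n\ge0$: $\hat v_{n+1}(0,0)=\lambda\hat v_n(0,1)+\mu_h\hat v_n(0,0)$; $\hat v_{n+1}(x,0)=-h(x)+\lambda\hat v_n(x,1)+\mu_l\hat v_n(x-1,0)+\delta\hat v_n(x,0)$ for $x\ge1$; $\hat v_{n+1}(x,1)=\max\{R+\hat v_{n+1}(x+1,0),\hat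 v_{n+1}(x,0)\}$ for $x\ge0$. $\Delta_n(x,i)=v_n(x,i)-v_n(x+1,i)$, $\hat\Delta_n(x,i)=\hat v_n(x,i)-\hat v_n(x+1,i)$. Threshold function: $T_f(\theta)=\sup\{k\ge0:f(k)\le\theta\}$ with $\sup\emptyset=-1$ ($+\infty$ allowed). Admission thresholds: $B^d_n=T_{\Delta_n(\cdot,0)}(R)$ and $\hat B^d_n=T_{\hat\Delta_n(\cdot,0)}(R)$. *)

From Stdlib Require Import Reals Lra Lia ZArith Classical ClassicalEpsilon.
Open Scope R_scope.

(* States (x,i) with x : nat and i : bool, where false = 0 and true = 1. *)

(* Combined (admission + service-rate control) value functions v_n.
   Parameters: lam = lambda, mul = mu_l, muh = mu_h, c, Rr = R, h. *)
Fixpoint V (lam mul muh c Rr : R) (h : nat -> R) (n : nat) : nat -> bool -> R :=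
  match n with
  | O => fun _ _ => 0
  | S m =>
    let vm := V lam mul muh c Rr h m in
    let d := muh - mul in
    let V0 := fun x : nat =>
      match x with
      | O => lam * vm O true + muh * vm O false
      | S y => - h x + lam * vm x true + mul * vm y false
               + Rmax (d * vm x false) (- c + d * vm y false)
      end in
    fun x i => if i then Rmax (Rr + V0 (S x)) (V0 x) else V0 x
  end.

Fixpoint Vhat (lam mul muh Rr : R) (h : nat -> R) (n : nat) : nat -> bool -> R :=
  match n with
  | O => fun _ _ => 0
  | S m =>
    let vm := Vhat lam mul muh Rr h m in
    let d := muh - mul in
    let V0 := fun x : nat =>
      match x with
      | O => lam * vm O true + muh * vm O false
      | S y => - h x + lam * vm x true + mul * vm y false + d * vm x false
      end in
    fun x i => if i then Rmax (Rr + V0 (S x)) (V0 x) else V0 x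
  end.

Definition DeltaN (lam mul muh c Rr : R) (h : nat -> R) (n x : nat) (i : bool) : R :=
  V lam mul muh c Rr h n x i - V lam mul muh c Rr h n (S x) i.
Definition DeltaNhat (lam mul muh Rr : R) (h : nat -> R) (n x : nat) (i : bool) : R :=
  Vhat lam mul muh Rr h n x i - Vhat lam mul muh Rr h n (S x) i.

(* Extended integers {..,-1,0,1,..} U {+infinity} for threshold values. *)
Inductive ezt := EFin (z : Z) | EInf.
Definition ezle (a b : ezt) : Prop :=
  match a, b with
  | _, EInf => True
  | EInf, EFin _ => False
  | EFin x, EFin y => (x <= y)%Z
  end.

Lemma max_exists (P : nat -> Prop) :
  (exists k, P k) -> (exists M, forall k, P k -> (k <= M)%nat) ->
  exists m, P m /\ forall k, P k -> (k <= m)%nat.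
Proof.
  intros [k0 Hk0] [M HM]. revert HM. induction M as [|M IH]; intros HM.
  - exists 0%nat. assert (k0 = 0)%nat by (specialize (HM k0 Hk0); lia). subst. split; auto.
  - destruct (classic (P (S M))) as [HP|HP].
    + exists (S M). split; auto.
    + apply IH. intros k Hk. specialize (HM k Hk).
      destruct (Nat.eq_dec k (S M)); [subst; contradiction | lia].
Qed.

(* Threshold function T_f(theta) = sup {k >= 0 : f k <= theta},
   with sup of the empty set = -1 and +infinity allowed. *)
Definition Tf (f : nat -> R) (theta : R) : ezt :=
  match excluded_middle_informative (exists k, f k <= theta) with
  | right _ => EFin (-1)%Z
  | left Hne =>
    match excluded_middle_informative
            (exists M, forall k, f k <= theta -> (k <= M)%nat) with
    | right _ => EInf
    | left Hb => EFin (Z.of_nat (proj1_sig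
                   (constructive_indefinite_description _ (max_exists _ Hne Hb))))
    end
  end.

Definition Bd (lam mul muh c Rr : R) (h : nat -> R) (n : nat) : ezt :=
  Tf (fun x => DeltaN lam mul muh c Rr h n x false) Rr.
Definition Bdhat (lam mul muh Rr : R) (h : nat -> R) (n : nat) : ezt :=
  Tf (fun x => DeltaNhat lam mul muh Rr h n x false) Rr.

From Stdlib Require Import Reals ZArith Lra Lia ClassicalEpsilon
  FunctionalExtensionality.
Open Scope R_scope.

(* Both value functions are built
   from the same two one-step operators: an "event" operator [step], which
   combines holding cost, an arrival term and the two service terms, and an
   admission operator [adm], which maximizes over accepting or rejecting an
   arriving customer.  The only difference is the service term: [ctrl] (a
   choice between rates mu_h and mu_l at cost c) for v_n, and the plain
   term (mu_h - mu_l) * v_n(x) for \hat v_n.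

   We first show that the operators preserve
   - "nonincreasing and concave in x" (for \hat v_n), and
   - the domination [dif_le f g] of the first differences of f by those of g;
   the service-control term is dominated provided the reference function
   is concave.  Induction on n then gives (i): first that every \hat v_n is
   nonincreasing concave, then that Delta_n <= \hat Delta_n.  Part (ii) follows
   because the threshold T_f(theta) is antitone in f. *)

Definition Dif (f : nat -> R) (x : nat) : R := f x - f (S x).
Definition Dpred (f : nat -> R) (x : nat) : R :=
  match x with O => 0 | S y => Dif f y end.

Definition decr_concave (f : nat -> R) : Prop :=
  forall x, 0 <= Dif f x /\ Dif f x <= Dif f (S x).

Definition dif_le (f g : nat -> R) : Prop := forall x, Dif f x <= Dif g x.

Definition adm (Rr : R) (w : nat -> R) (x : nat) : R := Rmax (Rr + w (S x)) (w x).

Definition step (lam mul : R) (h T W s : nat -> R) (x : nat) : R :=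
  - h x + lam * T x + mul * W (Nat.pred x) + s x.

Definition ctrl (c d : R) (W : nat -> R) (x : nat) : R :=
  match x with
  | O => d * W O
  | S y => Rmax (d * W (S y)) (- c + d * W y)
  end.

Lemma Rmax_sub_le (a b a' b' : R) : Rmax a b - Rmax a' b' <= Rmax (a - a') (b - b').
Proof. unfold Rmax; repeat destruct Rle_dec; lra. Qed.

Lemma adm_dif_le (Rr : R) (w u : nat -> R) :
  dif_le w u -> dif_le (adm Rr w) (adm Rr u).
Proof.
  intros Hwu x. pose proof (Hwu x). pose proof (Hwu (S x)).
  unfold Dif, adm in *; unfold Rmax; repeat destruct Rle_dec; lra.
Qed.

(* With a nonnegative reward, [adm] preserves nonincreasing concavity.
   Concavity of w is [dif_le w (w o S)], and adm commutes with the shift. *)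
Lemma adm_decr_concave (Rr : R) (w : nat -> R) :
  0 <= Rr -> decr_concave w -> decr_concave (adm Rr w).
Proof.
  intros HR Hw x. split.
  - destruct (Hw x), (Hw (S x)).
    unfold Dif, adm in *; unfold Rmax; repeat destruct Rle_dec; lra.
  - apply (adm_dif_le Rr w (fun k => w (S k))). intros k. apply Hw.
Qed.

Lemma Dif_step (lam mul : R) (h T W s : nat -> R) (x : nat) :
  Dif (step lam mul h T W s) x
  = (h (S x) - h x) + lam * Dif T x + mul * Dpred W x + Dif s x.
Proof. destruct x; unfold Dpred, Dif, step; simpl; ring. Qed.

Lemma Dpred_nonneg (W : nat -> R) (x : nat) :
  decr_concave W -> 0 <= Dpred W x.
Proof. intros HW; destruct x; simpl; [lra | apply HW]. Qed.

Lemma Dpred_le_Dif (W : nat -> R) (x : nat) :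
  decr_concave W -> Dpred W x <= Dif W x.
Proof. intros HW; destruct x; simpl; apply HW. Qed.

Lemma Dpred_dif_le (W' W : nat -> R) (x : nat) :
  dif_le W' W -> Dpred W' x <= Dpred W x.
Proof. intros H; destruct x; simpl; [lra | apply H]. Qed.

Lemma Dif_scale (d : R) (W : nat -> R) (x : nat) :
  Dif (fun y => d * W y) x = d * Dif W x.
Proof. unfold Dif; ring. Qed.

Lemma step_decr_concave (lam mul d : R) (h T W : nat -> R) :
  0 <= lam -> 0 <= mul -> 0 <= d ->
  (forall x, h x <= h (S x)) ->
  (forall x, h (S x) - h x <= h (S (S x)) - h (S x)) ->
  decr_concave T -> decr_concave W ->
  decr_concave (step lam mul h T W (fun y => d * W y)).
Proof.
  intros Hlam Hmul Hd Hmono Hconv HT HW x.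
  rewrite !Dif_step, !Dif_scale. simpl Dpred.
  destruct (HT x) as [T0 T1], (HW x) as [W0 W1].
  pose proof (Dpred_nonneg W x HW). pose proof (Dpred_le_Dif W x HW).
  pose proof (Hmono x). pose proof (Hconv x).
  split; nra.
Qed.

Lemma step_dif_le (lam mul : R) (h T' W' s' T W s : nat -> R) :
  0 <= lam -> 0 <= mul ->
  dif_le T' T -> dif_le W' W -> dif_le s' s ->
  dif_le (step lam mul h T' W' s') (step lam mul h T W s).
Proof.
  intros Hlam Hmul HT HW Hs x. rewrite !Dif_step.
  pose proof (HT x). pose proof (Hs x). pose proof (Dpred_dif_le W' W x HW).
  nra.
Qed.

(* At x+1 the control difference is at most d * max(Dif W' x, Dif W' (x+1)),
   and concavity of W bounds both by d * Dif W (x+1). *)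
Lemma ctrl_dif_le (c d : R) (W' W : nat -> R) :
  0 <= d -> dif_le W' W -> (forall x, Dif W x <= Dif W (S x)) ->
  dif_le (ctrl c d W') (fun y => d * W y).
Proof.
  intros Hd HW Hconc [|y]; unfold Dif; simpl.
  - pose proof (Rmax_l (d * W' 1%nat) (- c + d * W' 0%nat)).
    pose proof (HW 0%nat). unfold Dif in *. nra.
  - eapply Rle_trans; [apply Rmax_sub_le | apply Rmax_lub].
    + pose proof (HW (S y)). unfold Dif in *. nra.
    + pose proof (HW y). pose proof (Hconc y). unfold Dif in *. nra.
Qed.

Lemma Tf_antitone (f g : nat -> R) (theta : R) :
  (forall k, f k <= g k) -> ezle (Tf g theta) (Tf f theta).
Proof.
  intros Hfg.
  assert (Hsub : forall k, g k <= theta -> f k <= theta)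
    by (intros k Hk; specialize (Hfg k); lra).
  assert (Hneg : ezle (EFin (-1)) (Tf f theta)).
  { unfold Tf.
    destruct (excluded_middle_informative _); [destruct (excluded_middle_informative _)|];
      simpl; lia. }
  unfold Tf at 1.
  destruct (excluded_middle_informative (exists k, g k <= theta)) as [Hg | Hg];
    [| exact Hneg].
  assert (Hf : exists k, f k <= theta) by (destruct Hg as [k Hk]; eauto).
  unfold Tf.
  destruct (excluded_middle_informative (exists k, f k <= theta)) as [Hf' | Hf'];
    [| contradiction].
  destruct (excluded_middle_informative
              (exists M, forall k, f k <= theta -> (k <= M)%nat)) as [Bf | Bf];
    [| destruct (excluded_middle_informative _); exact I].
  destruct (excluded_middle_informative
              (exists M, forall k, g k <= theta -> (k <= M)%nat)) as [Bg | Bg].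
  -
    lazymatch goal with
    | |- ezle (EFin (Z.of_nat (proj1_sig ?mg))) (EFin (Z.of_nat (proj1_sig ?mf))) =>
        destruct (proj2_sig mg) as [Hmg _]; destruct (proj2_sig mf) as [_ Hmf]
    end.
    simpl. apply inj_le, Hmf, Hsub, Hmg.
  - exfalso. apply Bg. destruct Bf as [M HM]. exists M. auto.
Qed.

Section ValueFunctions.

Variables lam mul muh c Rr : R.
Variable h : nat -> R.
Hypothesis Hlam : 0 <= lam.
Hypothesis Hmul : 0 <= mul.
Hypothesis Hmulh : mul <= muh.
Hypothesis HR : 0 <= Rr.
Hypothesis Hh0 : h 0%nat = 0.
Hypothesis Hhmono : forall x, h x <= h (S x).
Hypothesis Hhconv : forall x, h (S x) - h x <= h (S (S x)) - h (S x).

Let vh (n : nat) (i : bool) : nat -> R := fun x => Vhat lam mul muh Rr h n x i.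
Let v (n : nat) (i : bool) : nat -> R := fun x => V lam mul muh c Rr h n x i.

Lemma Vhat_false_step (m : nat) :
  vh (S m) false = step lam mul h (vh m true) (vh m false)
                        (fun y => (muh - mul) * vh m false y).
Proof.
  apply functional_extensionality; intros [|y]; [| reflexivity].
  unfold vh, step; simpl. rewrite Hh0. ring.
Qed.

Lemma V_false_step (m : nat) :
  v (S m) false = step lam mul h (v m true) (v m false)
                       (ctrl c (muh - mul) (v m false)).
Proof.
  apply functional_extensionality; intros [|y]; [| reflexivity].
  unfold v, step, ctrl; simpl. rewrite Hh0. ring.
Qed.

Lemma Vhat_true_step (m : nat) : vh (S m) true = adm Rr (vh (S m) false).
Proof. reflexivity. Qed.

Lemma V_true_step (m : nat) : v (S m) true = adm Rr (v (S m) false).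
Proof. reflexivity. Qed.

Lemma Vhat_decr_concave (n : nat) :
  decr_concave (vh n false) /\ decr_concave (vh n true).
Proof.
  induction n as [|m [IHf IHt]].
  - split; intros x; unfold Dif, vh; simpl; lra.
  - assert (Hf : decr_concave (vh (S m) false)).
    { rewrite Vhat_false_step. apply step_decr_concave; auto; lra. }
    split; [exact Hf |].
    rewrite Vhat_true_step. apply adm_decr_concave; auto.
Qed.

Lemma V_dif_le_Vhat (n : nat) :
  dif_le (v n false) (vh n false) /\ dif_le (v n true) (vh n true).
Proof.
  induction n as [|m [IHf IHt]].
  - split; intros x; unfold Dif, v, vh; simpl; lra.
  - assert (Hf : dif_le (v (S m) false) (vh (S m) false)).
    { rewrite V_false_step, Vhat_false_step.
      apply step_dif_le; auto.
      apply ctrl_dif_le; auto; [lra |].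
      apply Vhat_decr_concave. }
    split; [exact Hf |].
    rewrite V_true_step, Vhat_true_step. apply adm_dif_le, Hf.
Qed.

End ValueFunctions.

Theorem theorem3 (lam mul muh beta c Rr : R) (h : nat -> R)
  (Hlam : 0 < lam) (Hmul : 0 < mul) (Hmulh : mul < muh) (Hbeta : 0 < beta)
  (Hnorm : lam + muh + beta = 1) (HR : 0 <= Rr) (Hc : 0 < c)
  (Hh0 : h 0%nat = 0)
  (Hhmono : forall x : nat, h x <= h (S x))
  (Hhconv : forall x : nat, h (S x) - h x <= h (S (S x)) - h (S x)) :
  (forall (n x : nat) (i : bool),
      DeltaN lam mul muh c Rr h n x i <= DeltaNhat lam mul muh Rr h n x i)
  /\
  (forall n : nat, (1 <= n)%nat ->
      ezle (Bdhat lam mul muh Rr h n) (Bd lam mul muh c Rr h n)).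
Proof.
  assert (Hdom : forall n,
    dif_le (fun x => V lam mul muh c Rr h n x false)
           (fun x => Vhat lam mul muh Rr h n x false) /\
    dif_le (fun x => V lam mul muh c Rr h n x true)
           (fun x => Vhat lam mul muh Rr h n x true)).
  { intros n. apply V_dif_le_Vhat; auto; lra. }
  split.
  - intros n x [|]; apply (Hdom n).
  - intros n _. apply Tf_antitone. intros x. apply (Hdom n).
Qed.
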